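(* If $f\in\mathcal{G}=\mathcal{G}(1)$, then $\frac12\le \det T_{3,1}(f)\le 1$, and both bounds are sharp.
   Context: $\mathbb{D}=\{z\in\mathbb{C}:|z|<1\}$. $\mathcal{A}$ is the class of analytic functions $f$ on $\mathbb{D}$ with $f(0)=0$, $f'(0)=1$, written $f(z)=z+a_2z^2+a_3z^3+\cdots$. For $0<\delta\le1$, $\mathcal{G}(\delta)=\{f\in\mathcal{A}: \mathrm{Re}[1+zf''(z)/f'(z)]<1+\delta/2 \text{ for all } z\in\mathbb{D}\}$; here $\delta=1$. For $f\in\mathcal{A}$, $\det T_{3,1}(f)=2\,\mathrm{Re}(a_2^2\overline{a_3})-2|a_2|^2-|a_3|^2+1$ is the determinant of the Hermitian Toeplitz matrix $\begin{pmatrix}1&a_2&a_3\\ \overline{a_2}&1&a_2\\ \overline{a_3}&\overline{a_2}&1\end{pmatrix}$. *)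

From Stdlib Require Import Reals Lra.
Open Scope R_scope.

Definition Cx := (R * R)%type.
Definition Re (z : Cx) : R := fst z.
Definition Im (z : Cx) : R := snd z.
Definition C0 : Cx := (0, 0).
Definition C1 : Cx := (1, 0).
Definition RtoC (r : R) : Cx := (r, 0).
Definition Cadd (z w : Cx) : Cx := (Re z + Re w, Im z + Im w).
Definition Cmul (z w : Cx) : Cx :=
  (Re z * Re w - Im z * Im w, Re z * Im w + Im z * Re w).
Definition Cconj (z : Cx) : Cx := (Re z, - Im z).
Definition Cnorm2 (z : Cx) : R := Re z * Re z + Im z * Im z.
Definition Cscal (r : R) (z : Cx) : Cx := (r * Re z, r * Im z).
Definition Cdiv (z w : Cx) : Cx := Cscal (/ Cnorm2 w) (Cmul z (Cconj w)).
Fixpoint Cpow (z : Cx) (n : nat) : Cx :=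
  match n with O => C1 | S m => Cmul z (Cpow z m) end.

Definition in_D (z : Cx) : Prop := Cnorm2 z < 1.

Definition Csum (u : nat -> Cx) (s : Cx) : Prop :=
  Un_cv (fun N => sum_f_R0 (fun n => Re (u n)) N) (Re s) /\
  Un_cv (fun N => sum_f_R0 (fun n => Im (u n)) N) (Im s).

(** An analytic function f on D is represented by its Taylor coefficients
    a : nat -> Cx at 0, f(z) = sum a_n z^n, the series converging on all of D. *)
Definition analytic_on_D (a : nat -> Cx) : Prop :=
  forall z, in_D z -> exists s, Csum (fun n => Cmul (a n) (Cpow z n)) s.

Definition class_A (a : nat -> Cx) : Prop :=
  analytic_on_D a /\ a O = C0 /\ a 1%nat = C1.

Definition f1_terms (a : nat -> Cx) (z : Cx) (n : nat) : Cx :=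
  Cmul (Cscal (INR (n + 1)) (a (n + 1)%nat)) (Cpow z n).
Definition f2_terms (a : nat -> Cx) (z : Cx) (n : nat) : Cx :=
  Cmul (Cscal (INR ((n + 2) * (n + 1))) (a (n + 2)%nat)) (Cpow z n).

(** Class G(delta): Re[1 + z f''(z)/f'(z)] < 1 + delta/2 on D
    (with f'(z) <> 0 so that the quotient is defined). *)
Definition class_G (delta : R) (a : nat -> Cx) : Prop :=
  class_A a /\
  forall z d1 d2, in_D z -> Csum (f1_terms a z) d1 -> Csum (f2_terms a z) d2 ->
    d1 <> C0 /\ Re (Cadd C1 (Cdiv (Cmul z d2) d1)) < 1 + delta / 2.

Definition detT31 (a : nat -> Cx) : R :=
  2 * Re (Cmul (Cmul (a 2%nat) (a 2%nat)) (Cconj (a 3%nat)))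
  - 2 * Cnorm2 (a 2%nat) - Cnorm2 (a 3%nat) + 1.

(* For [f] in [G(1)], [p := (f' - 2 z f'') / f' = 1 - 2 z f''/f'] has positive real part on
   the unit disk and expands as [p = 1 + c1 z + c2 z^2 + ...] with [c1 = -4 a2] and
   [c2 = 8 a2^2 - 12 a3].  Averaging [Re p * |x0 + x1 z + x2 z^2|^2] over the circle
   [|z| = rho] and letting [rho -> 1] shows that the Toeplitz form of [(1, c1, c2)] is
   positive semidefinite (Caratheodory-Toeplitz); the averages are computed with the mean
   value property of holomorphic functions, obtained by differentiating the circle mean in
   the radius.  A one-parameter family of vectors [x] then gives
   [6 |a3| <= 1 - 4 |a2|^2], from which both bounds on [det T_{3,1}] follow by elementary
   algebra; they are attained by [f = z] and [f = z + z^2 / 2]. *)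

From Stdlib Require Import Reals Psatz Arith.
From Coquelicot Require Import Coquelicot.
Open Scope R_scope.

Definition Csub (z w : Cx) : Cx := (Re z - Re w, Im z - Im w).
Definition Cinv (z : Cx) : Cx := (Re z / Cnorm2 z, - Im z / Cnorm2 z).
Definition Cabs (z : Cx) : R := sqrt (Cnorm2 z).
Definition Ci : Cx := (0, 1).

Ltac cunfold :=
  cbv [Cdiv Cinv Cadd Cmul Cconj Cnorm2 Cscal RtoC C0 C1 Csub Ci Re Im fst snd] in *.
Ltac cdestr := repeat match goal with z : Cx |- _ => destruct z end.

(* [ceq] proves identities of complex expressions by [ring] on real and
   imaginary parts; every complex subterm that is not built from the field
   operations is abstracted first. *)
Ltac is_Cop t :=
  match t with
  | Cadd _ _ => idtac | Cmul _ _ => idtac | Csub _ _ => idtac | Cscal _ _ => idtac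
  | Cconj _ => idtac | RtoC _ => idtac | (_, _) => idtac
  | C0 => idtac | C1 => idtac | Ci => idtac
  end.
Ltac cgen :=
  repeat match goal with
  | |- context [?t] =>
      lazymatch type of t with Cx => idtac end;
      tryif is_var t then fail else tryif is_Cop t then fail else (generalize t; intro)
  end.
Ltac ceq := cbv beta; cgen; cdestr; cunfold; f_equal; ring.

Lemma Cnorm2_ge0 z : 0 <= Cnorm2 z.
Proof. cdestr; cunfold; nra. Qed.

Lemma Cnorm2_mul z w : Cnorm2 (Cmul z w) = Cnorm2 z * Cnorm2 w.
Proof. cdestr; cunfold; ring. Qed.

Lemma Cnorm2_pos z : z <> C0 -> 0 < Cnorm2 z.
Proof.
  intro Hz. destruct (Rle_lt_dec (Cnorm2 z) 0) as [H|H]; auto.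
  exfalso. apply Hz. cdestr; cunfold. f_equal; nra.
Qed.

Lemma Cmul_neq0 z w : z <> C0 -> w <> C0 -> Cmul z w <> C0.
Proof.
  intros Hz Hw E. pose proof (Cnorm2_pos _ Hz). pose proof (Cnorm2_pos _ Hw).
  assert (Hn : Cnorm2 (Cmul z w) = 0) by (rewrite E; cunfold; ring).
  rewrite Cnorm2_mul in Hn. nra.
Qed.

Lemma Cmul_Cinv z : z <> C0 -> Cmul z (Cinv z) = C1.
Proof. intro Hz. pose proof (Cnorm2_pos _ Hz). cdestr; cunfold. f_equal; field; lra. Qed.

Lemma Cabs_ge0 z : 0 <= Cabs z.
Proof. apply sqrt_pos. Qed.

Lemma Cabs_sqr z : Cabs z * Cabs z = Cnorm2 z.
Proof. apply sqrt_sqrt, Cnorm2_ge0. Qed.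

Lemma Cabs_le_sqr z b : 0 <= b -> Cnorm2 z <= b * b -> Cabs z <= b.
Proof. intros Hb H. unfold Cabs. rewrite <- (sqrt_square b) by exact Hb. apply sqrt_le_1_alt, H. Qed.

Lemma Cabs0 : Cabs C0 = 0.
Proof. unfold Cabs; cunfold. rewrite Rmult_0_l, Rplus_0_l. apply sqrt_0. Qed.

Lemma Cabs_real r : 0 <= r -> Cabs (r, 0) = r.
Proof. intro Hr. unfold Cabs; cunfold. rewrite Rmult_0_l, Rplus_0_r. apply sqrt_square, Hr. Qed.

Lemma Cabs_mul z w : Cabs (Cmul z w) = Cabs z * Cabs w.
Proof. unfold Cabs. rewrite Cnorm2_mul. apply sqrt_mult; apply Cnorm2_ge0. Qed.

Lemma Cabs_scal r z : Cabs (Cscal r z) = Rabs r * Cabs z.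
Proof.
  unfold Cabs. rewrite <- sqrt_Rsqr_abs, <- sqrt_mult by (apply Rle_0_sqr || apply Cnorm2_ge0).
  f_equal. unfold Rsqr. cdestr; cunfold. ring.
Qed.

Lemma Cabs_pow z n : Cabs (Cpow z n) = Cabs z ^ n.
Proof.
  induction n as [|n IH]; simpl.
  - apply (Cabs_real 1); lra.
  - rewrite Cabs_mul, IH. reflexivity.
Qed.

Lemma Re_le_Cabs z : Rabs (Re z) <= Cabs z.
Proof.
  unfold Cabs. rewrite <- sqrt_Rsqr_abs. apply sqrt_le_1_alt. unfold Rsqr. cdestr; cunfold. nra.
Qed.

Lemma Im_le_Cabs z : Rabs (Im z) <= Cabs z.
Proof.
  unfold Cabs. rewrite <- sqrt_Rsqr_abs. apply sqrt_le_1_alt. unfold Rsqr. cdestr; cunfold. nra.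
Qed.

Lemma Cabs_le_ReIm z : Cabs z <= Rabs (Re z) + Rabs (Im z).
Proof.
  pose proof (Rabs_pos (Re z)); pose proof (Rabs_pos (Im z)).
  apply Cabs_le_sqr; [lra|].
  assert (Cnorm2 z = Rabs (Re z) * Rabs (Re z) + Rabs (Im z) * Rabs (Im z)).
  { rewrite <- !Rabs_mult, !Rabs_right; unfold Cnorm2; nra. }
  nra.
Qed.

Lemma Cabs_add z w : Cabs (Cadd z w) <= Cabs z + Cabs w.
Proof.
  pose proof (Cabs_ge0 z); pose proof (Cabs_ge0 w).
  apply Cabs_le_sqr; [lra|].
  assert (Hcross : Rabs (Re (Cmul z (Cconj w))) <= Cabs z * Cabs w).
  { eapply Rle_trans; [apply Re_le_Cabs|]. rewrite Cabs_mul. right. f_equal.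
    unfold Cabs. f_equal. cdestr; cunfold. ring. }
  assert (E : Cnorm2 (Cadd z w) = Cnorm2 z + Cnorm2 w + 2 * Re (Cmul z (Cconj w)))
    by (cdestr; cunfold; ring).
  rewrite E, <- (Cabs_sqr z), <- (Cabs_sqr w).
  pose proof (Rle_abs (Re (Cmul z (Cconj w)))). nra.
Qed.

Lemma Cabs_sub_tri z w u : Cabs (Csub z u) <= Cabs (Csub z w) + Cabs (Csub w u).
Proof. replace (Csub z u) with (Cadd (Csub z w) (Csub w u)) by ceq. apply Cabs_add. Qed.

Lemma Cabs_sub z w : Cabs (Csub z w) <= Cabs z + Cabs w.
Proof.
  replace (Csub z w) with (Cadd z (Cscal (-1) w)) by ceq.
  eapply Rle_trans; [apply Cabs_add|]. rewrite Cabs_scal, Rabs_left by lra. lra.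
Qed.

Lemma Cabs_sub0 z : Cabs (Csub z C0) = Cabs z.
Proof. f_equal. ceq. Qed.

Lemma in_D_Cabs z : in_D z <-> Cabs z < 1.
Proof.
  unfold in_D, Cabs. split; intro H.
  - rewrite <- sqrt_1. apply sqrt_lt_1_alt. split; auto using Cnorm2_ge0.
  - pose proof (Cabs_sqr z). pose proof (Cabs_ge0 z). unfold Cabs in *. nra.
Qed.

Definition radius_ge1 (b : nat -> Cx) : Prop :=
  forall r, 0 <= r < 1 -> exists M, forall n, Cabs (b n) * r ^ n <= M.

Definition pderiv (b : nat -> Cx) (n : nat) : Cx := Cscal (INR (S n)) (b (S n)).

Lemma nat_pow_bounded q : 0 <= q < 1 -> exists C, forall n, INR n * q ^ n <= C.
Proof.
  intros Hq. destruct (Req_dec q 0) as [->|Hq0].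
  - exists 0. intros [|n]; simpl; [lra|]. rewrite Rmult_0_l, Rmult_0_r. lra.
  - set (d := / q - 1).
    assert (Hd : q * (1 + d) = 1) by (unfold d; field; auto).
    assert (Hdp : 0 < d).
    { unfold d. assert (1 < / q) by (rewrite <- Rinv_1; apply Rinv_lt_contravar; lra). lra. }
    (* Bernoulli's inequality, since [q = 1 / (1 + d)] *)
    assert (Hb : forall n, q ^ n * (1 + INR n * d) <= 1).
    { induction n as [|n IH]; [simpl; lra|]. rewrite S_INR. simpl pow.
      assert (0 <= q ^ n) by (apply pow_le; lra). pose proof (pos_INR n).
      replace (q * q ^ n * (1 + (INR n + 1) * d)) with (q ^ n * (1 + q * INR n * d))
        by (rewrite <- Hd at 1; ring).
      assert (0 <= q ^ n * INR n * d) by (repeat apply Rmult_le_pos; lra). nra. }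
    exists (/ d). intro n. specialize (Hb n).
    assert (0 <= q ^ n) by (apply pow_le; lra).
    apply (Rmult_le_reg_r d); [lra|]. rewrite Rinv_l by lra. nra.
Qed.

Lemma radius_ge1_bound_ge0 b r M : (forall n, Cabs (b n) * r ^ n <= M) -> 0 <= M.
Proof. intro H. specialize (H O). pose proof (Cabs_ge0 (b O)). simpl in H. lra. Qed.

Lemma radius_ge1_mid b r : radius_ge1 b -> 0 <= r < 1 ->
  exists M, 0 <= M /\ forall n, Cabs (b n) * ((1 + r) / 2) ^ n <= M.
Proof.
  intros H Hr. destruct (H ((1 + r) / 2) ltac:(lra)) as [M HM].
  exists M. split; [eapply radius_ge1_bound_ge0|]; eauto.
Qed.

Lemma radius_ge1_ext b c : (forall n, b n = c n) -> radius_ge1 b -> radius_ge1 c.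
Proof.
  intros E H r Hr. destruct (H r Hr) as [M HM]. exists M. intro n. rewrite <- E. auto.
Qed.

Lemma radius_ge1_tail b : radius_ge1 b -> radius_ge1 (fun n => b (S n)).
Proof.
  intros H r Hr. destruct (radius_ge1_mid b r H Hr) as [M [HM0 HM]].
  set (r' := (1 + r) / 2) in *. assert (Hr' : 0 < r') by (unfold r'; lra).
  exists (M / r'). intro n. specialize (HM (S n)). simpl in HM.
  assert (r ^ n <= r' ^ n) by (apply pow_incr; unfold r'; lra).
  assert (0 <= r' ^ n) by (apply pow_le; lra).
  assert (Cabs (b (S n)) * r ^ n <= Cabs (b (S n)) * r' ^ n)
    by (apply Rmult_le_compat_l; auto using Cabs_ge0).
  apply (Rmult_le_reg_r r'); auto. replace (M / r' * r') with M by (field; lra).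
  clearbody r'. nra.
Qed.

Lemma radius_ge1_natmul b : radius_ge1 b -> radius_ge1 (fun n => Cscal (INR n) (b n)).
Proof.
  intros H r Hr. destruct (radius_ge1_mid b r H Hr) as [M [HM0 HM]].
  set (r' := (1 + r) / 2) in *. assert (Hr' : 0 < r') by (unfold r'; lra).
  assert (Hq : 0 <= r / r' < 1).
  { split; [apply Rdiv_le_0_compat; lra|].
    apply (Rmult_lt_reg_r r'); auto. replace (r / r' * r') with r by (field; lra). unfold r'; lra. }
  destruct (nat_pow_bounded (r / r') Hq) as [C HC].
  exists (C * M). intro n. specialize (HM n). specialize (HC n).
  rewrite Cabs_scal, Rabs_right by (apply Rle_ge, pos_INR).
  replace (r ^ n) with ((r / r') ^ n * r' ^ n) by (rewrite <- Rpow_mult_distr; f_equal; field; lra).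
  pose proof (pos_INR n). pose proof (Cabs_ge0 (b n)).
  assert (0 <= (r / r') ^ n) by (apply pow_le; lra). assert (0 <= r' ^ n) by (apply pow_le; lra).
  replace (INR n * Cabs (b n) * ((r / r') ^ n * r' ^ n))
    with ((INR n * (r / r') ^ n) * (Cabs (b n) * r' ^ n)) by ring.
  apply Rmult_le_compat; auto; apply Rmult_le_pos; auto.
Qed.

Lemma radius_ge1_pderiv b : radius_ge1 b -> radius_ge1 (pderiv b).
Proof. intro H. exact (radius_ge1_tail _ (radius_ge1_natmul b H)). Qed.

Lemma sum_f_R0_ge_term (f : nat -> R) N n :
  (forall k, 0 <= f k) -> (n <= N)%nat -> f n <= sum_f_R0 f N.
Proof.
  intros Hf Hn. induction Hn as [|N Hn IH]; simpl.
  - destruct n; simpl; [lra|]. pose proof (cond_pos_sum f n Hf). lra.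
  - specialize (Hf (S N)). lra.
Qed.

Lemma radius_ge1_finite b N : (forall n, (N < n)%nat -> b n = C0) -> radius_ge1 b.
Proof.
  intros H r Hr. exists (sum_f_R0 (fun k => Cabs (b k)) N). intro n.
  assert (Hr1 : r ^ n <= 1) by (rewrite <- (pow1 n); apply pow_incr; lra).
  assert (0 <= r ^ n) by (apply pow_le; lra).
  destruct (le_lt_dec n N) as [Hn|Hn].
  - pose proof (sum_f_R0_ge_term (fun k => Cabs (b k)) N n (fun k => Cabs_ge0 (b k)) Hn).
    pose proof (Cabs_ge0 (b n)). nra.
  - rewrite H, Cabs0 by exact Hn. rewrite Rmult_0_l.
    apply cond_pos_sum. intro; apply Cabs_ge0.
Qed.

Lemma cv0_bounded (u : nat -> R) : Un_cv u 0 -> exists M, forall n, Rabs (u n) <= M.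
Proof.
  intro H. destruct (H 1 Rlt_0_1) as [N HN].
  exists (1 + sum_f_R0 (fun k => Rabs (u k)) N). intro n.
  pose proof (cond_pos_sum (fun k => Rabs (u k)) N (fun k => Rabs_pos (u k))).
  destruct (le_lt_dec n N) as [Hn|Hn].
  - pose proof (sum_f_R0_ge_term (fun k => Rabs (u k)) N n (fun k => Rabs_pos (u k)) Hn). lra.
  - specialize (HN n ltac:(lia)). unfold R_dist in HN. rewrite Rminus_0_r in HN. lra.
Qed.

Lemma radius_ge1_of_analytic a : analytic_on_D a -> radius_ge1 a.
Proof.
  intros Ha r Hr.
  assert (Hz : in_D (r, 0)) by (unfold in_D; cunfold; nra).
  destruct (Ha _ Hz) as [s [H1 H2]].
  assert (Hterm : forall (u : nat -> R) l, Un_cv (sum_f_R0 u) l -> exists M, forall n, Rabs (u n) <= M).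
  { intros u l Hu. apply cv0_bounded, is_lim_seq_Reals, ex_series_lim_0.
    exists l. apply is_series_Reals, Hu. }
  destruct (Hterm _ _ H1) as [M1 HM1]. destruct (Hterm _ _ H2) as [M2 HM2].
  exists (M1 + M2). intro n.
  replace (Cabs (a n) * r ^ n) with (Cabs (Cmul (a n) (Cpow (r, 0) n)))
    by (rewrite Cabs_mul, Cabs_pow, Cabs_real by lra; reflexivity).
  eapply Rle_trans; [apply Cabs_le_ReIm|]. specialize (HM1 n). specialize (HM2 n). lra.
Qed.

Definition abs_summable (u : nat -> Cx) : Prop := ex_series (fun n => Cabs (u n)).
Definition Cseries (u : nat -> Cx) : Cx :=
  (Series (fun n => Re (u n)), Series (fun n => Im (u n))).

Lemma ex_series_Rabs_le (u v : nat -> R) : (forall n, Rabs (u n) <= v n) -> ex_series v -> ex_series u.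
Proof. intros H Hv. exact (@ex_series_le R_AbsRing R_CompleteNormedModule u v H Hv). Qed.

Lemma ex_series_ext_R (u v : nat -> R) : (forall n, u n = v n) -> ex_series u -> ex_series v.
Proof. intros E H. exact (@ex_series_ext R_AbsRing R_NormedModule u v E H). Qed.

Lemma abs_summable_le u (v : nat -> R) : (forall n, Cabs (u n) <= v n) -> ex_series v -> abs_summable u.
Proof.
  intros H Hv. apply (ex_series_Rabs_le _ v); auto.
  intro n. rewrite Rabs_right; auto using Rle_ge, Cabs_ge0.
Qed.

Lemma abs_summable_Re u : abs_summable u -> ex_series (fun n => Re (u n)).
Proof. intro H. apply (ex_series_Rabs_le _ _ (fun n => Re_le_Cabs (u n)) H). Qed.

Lemma abs_summable_Im u : abs_summable u -> ex_series (fun n => Im (u n)).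
Proof. intro H. apply (ex_series_Rabs_le _ _ (fun n => Im_le_Cabs (u n)) H). Qed.

Lemma abs_summable_ext u v : (forall n, u n = v n) -> abs_summable u -> abs_summable v.
Proof. intros E H. apply (ex_series_ext_R _ _ (fun n => f_equal Cabs (E n)) H). Qed.

Lemma abs_summable_scale k u : abs_summable u -> abs_summable (fun n => Cmul k (u n)).
Proof.
  intro Hu. apply abs_summable_le with (fun n => Cabs k * Cabs (u n)).
  - intro n. rewrite Cabs_mul. lra.
  - exact (ex_series_scal_l _ _ Hu).
Qed.

Lemma abs_summable_sub u v : abs_summable u -> abs_summable v -> abs_summable (fun n => Csub (u n) (v n)).
Proof.
  intros Hu Hv. apply abs_summable_le with (fun n => Cabs (u n) + Cabs (v n)).
  - intro n. apply Cabs_sub.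
  - exact (ex_series_plus _ _ Hu Hv).
Qed.

Lemma abs_summable_untail u : abs_summable (fun n => u (S n)) -> abs_summable u.
Proof. intro H. apply ex_series_incr_1, H. Qed.

Lemma Cseries_ext u v : (forall n, u n = v n) -> Cseries u = Cseries v.
Proof. intro E. unfold Cseries. f_equal; apply Series_ext; intro n; rewrite E; reflexivity. Qed.

Lemma Cseries_scale k u : abs_summable u -> Cseries (fun n => Cmul k (u n)) = Cmul k (Cseries u).
Proof.
  intro Hu. pose proof (abs_summable_Re _ Hu) as H1. pose proof (abs_summable_Im _ Hu) as H2.
  unfold Cseries, Cmul, Re, Im in *; simpl. f_equal.
  - rewrite <- !Series_scal_l, <- Series_minus
      by (apply (ex_series_scal_l _ _ H1) || apply (ex_series_scal_l _ _ H2)).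
    apply Series_ext. reflexivity.
  - rewrite <- !Series_scal_l, <- Series_plus
      by (apply (ex_series_scal_l _ _ H1) || apply (ex_series_scal_l _ _ H2)).
    apply Series_ext. reflexivity.
Qed.

Lemma Cseries_sub u v : abs_summable u -> abs_summable v ->
  Cseries (fun n => Csub (u n) (v n)) = Csub (Cseries u) (Cseries v).
Proof.
  intros Hu Hv. unfold Cseries, Csub; simpl. f_equal.
  - rewrite <- Series_minus by (apply abs_summable_Re; auto). reflexivity.
  - rewrite <- Series_minus by (apply abs_summable_Im; auto). reflexivity.
Qed.

Lemma Cseries_tail u : abs_summable u -> Cseries u = Cadd (u O) (Cseries (fun n => u (S n))).
Proof.
  intros Hu. unfold Cseries, Cadd; simpl. f_equal; apply Series_incr_1.
  - apply abs_summable_Re, Hu.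
  - apply abs_summable_Im, Hu.
Qed.

Lemma Cseries_bound u (v : nat -> R) : abs_summable u -> (forall n, Cabs (u n) <= v n) ->
  ex_series v -> Cabs (Cseries u) <= 2 * Series v.
Proof.
  intros Hu H Hv.
  assert (HRe : ex_series (fun n => Rabs (Re (u n))))
    by (apply (ex_series_Rabs_le _ _ (fun n => eq_ind_r (fun x => x <= _) (Re_le_Cabs (u n))
                                                (Rabs_Rabsolu _)) Hu)).
  assert (HIm : ex_series (fun n => Rabs (Im (u n))))
    by (apply (ex_series_Rabs_le _ _ (fun n => eq_ind_r (fun x => x <= _) (Im_le_Cabs (u n))
                                                (Rabs_Rabsolu _)) Hu)).
  assert (Series (fun n => Rabs (Re (u n))) <= Series v).
  { apply Series_le; auto. intro n. split; [apply Rabs_pos|].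
    eapply Rle_trans; [apply Re_le_Cabs|apply H]. }
  assert (Series (fun n => Rabs (Im (u n))) <= Series v).
  { apply Series_le; auto. intro n. split; [apply Rabs_pos|].
    eapply Rle_trans; [apply Im_le_Cabs|apply H]. }
  eapply Rle_trans; [apply Cabs_le_ReIm|]. unfold Cseries, Re at 1, Im at 1; simpl.
  pose proof (Series_Rabs _ HRe). pose proof (Series_Rabs _ HIm). lra.
Qed.

Lemma Cseries_Csum u : abs_summable u -> Csum u (Cseries u).
Proof.
  intro Hu. split; apply is_series_Reals, Series_correct.
  - apply abs_summable_Re, Hu.
  - apply abs_summable_Im, Hu.
Qed.

Lemma Csum_unique u s s' : Csum u s -> Csum u s' -> s = s'.
Proof.
  intros [H1 H2] [H3 H4]. destruct s, s'. unfold Re, Im in *; simpl in *.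
  f_equal; eapply UL_sequence; eauto.
Qed.

Definition pterm (b : nat -> Cx) (z : Cx) (n : nat) : Cx := Cmul (b n) (Cpow z n).
Definition psum (b : nat -> Cx) (z : Cx) : Cx := Cseries (pterm b z).

Lemma radius_ge1_series b R : radius_ge1 b -> 0 <= R < 1 -> ex_series (fun n => Cabs (b n) * R ^ n).
Proof.
  intros Hb HR. destruct (radius_ge1_mid b R Hb HR) as [M [HM0 HM]].
  set (r := (1 + R) / 2) in *. assert (Hr : 0 < r) by (unfold r; lra).
  assert (Hq : 0 <= R / r < 1).
  { split; [apply Rdiv_le_0_compat; lra|].
    apply (Rmult_lt_reg_r r); auto. replace (R / r * r) with R by (field; lra). unfold r; lra. }
  apply (ex_series_Rabs_le _ (fun n => M * (R / r) ^ n)).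
  - intro n. specialize (HM n).
    assert (0 <= (R / r) ^ n) by (apply pow_le; lra).
    rewrite Rabs_right by (apply Rle_ge, Rmult_le_pos; [apply Cabs_ge0|apply pow_le; lra]).
    replace (Cabs (b n) * R ^ n) with (Cabs (b n) * r ^ n * (R / r) ^ n)
      by (rewrite Rmult_assoc, <- Rpow_mult_distr; do 2 f_equal; field; lra).
    apply Rmult_le_compat_r; auto.
  - apply (ex_series_scal_l M (fun n => (R / r) ^ n)), ex_series_geom. rewrite Rabs_right; lra.
Qed.

Lemma radius_ge1_abs_summable b z : radius_ge1 b -> Cabs z < 1 -> abs_summable (pterm b z).
Proof.
  intros Hb Hz. eapply ex_series_ext_R; [|apply (radius_ge1_series b (Cabs z) Hb)].
  - intro n. unfold pterm. rewrite Cabs_mul, Cabs_pow. reflexivity.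
  - pose proof (Cabs_ge0 z). lra.
Qed.

Lemma psum_Csum b z : radius_ge1 b -> in_D z -> Csum (pterm b z) (psum b z).
Proof. intros Hb Hz. apply Cseries_Csum, radius_ge1_abs_summable, in_D_Cabs; auto. Qed.

Lemma psum_tail b z : radius_ge1 b -> Cabs z < 1 ->
  psum b z = Cadd (b O) (Cmul z (psum (fun n => b (S n)) z)).
Proof.
  intros Hb Hz. unfold psum.
  rewrite Cseries_tail, <- Cseries_scale by auto using radius_ge1_abs_summable, radius_ge1_tail.
  f_equal; [unfold pterm; simpl; ceq|].
  apply Cseries_ext. intro n. unfold pterm. simpl. ceq.
Qed.

Lemma psum_zero b z : (forall n, b n = C0) -> psum b z = C0.
Proof.
  intro H. unfold psum, Cseries, pterm, C0.
  f_equal; rewrite (Series_ext _ (fun _ => 0 * 0)) by (intro n; rewrite H; cunfold; ring);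
    rewrite Series_scal_l; ring.
Qed.

Lemma pow_taylor w z R n : 0 < R -> Cabs w <= R -> Cabs z <= R ->
  Cabs (Csub (Csub (Cpow w n) (Cpow z n)) (Cmul (Cscal (INR n) (Csub w z)) (Cpow z (pred n))))
  <= INR n * INR n * R ^ n * (Cabs (Csub w z) ^ 2 / (R * R)).
Proof.
  intros HR Hw Hz. pose proof (Cabs_ge0 (Csub w z)) as Hk.
  set (k := Cabs (Csub w z)) in *.
  set (E := fun n => Csub (Csub (Cpow w n) (Cpow z n))
                          (Cmul (Cscal (INR n) (Csub w z)) (Cpow z (pred n)))).
  change (Cabs (E n) <= INR n * INR n * R ^ n * (k ^ 2 / (R * R))).
  induction n as [|[|m] IH].
  - replace (E O) with C0 by (unfold E; simpl; ceq). rewrite Cabs0. simpl. lra.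
  - replace (E 1%nat) with C0 by (unfold E; simpl; ceq). rewrite Cabs0.
    assert (0 <= k ^ 2 / (R * R)) by (apply Rdiv_le_0_compat; nra). simpl. nra.
  - assert (Erec : E (S (S m)) = Cadd (Cmul w (E (S m)))
              (Cscal (INR (S m)) (Cmul (Cmul (Csub w z) (Csub w z)) (Cpow z m)))).
    { unfold E. simpl pred. rewrite !S_INR. simpl Cpow. ceq. }
    rewrite Erec. eapply Rle_trans; [apply Cabs_add|].
    rewrite Cabs_mul, Cabs_scal, !Cabs_mul, Cabs_pow, Rabs_right by (apply Rle_ge, pos_INR).
    fold k. pose proof (Cabs_ge0 (E (S m))).
    assert (Hzm : Cabs z ^ m <= R ^ m) by (apply pow_incr; split; auto; apply Cabs_ge0).
    assert (0 <= Cabs z ^ m) by (apply pow_le, Cabs_ge0).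
    assert (0 <= R ^ m) by (apply pow_le; lra).
    pose proof (pos_INR m). rewrite !S_INR in *.
    replace ((INR m + 1) * (INR m + 1) * R ^ S m * (k ^ 2 / (R * R)))
      with ((INR m + 1) * (INR m + 1) * R ^ m * (k * k) / R) in IH by (simpl; field; lra).
    replace ((INR m + 1 + 1) * (INR m + 1 + 1) * R ^ S (S m) * (k ^ 2 / (R * R)))
      with ((INR m + 1 + 1) * (INR m + 1 + 1) * R ^ m * (k * k)) by (simpl; field; lra).
    assert (HwE : Cabs w * Cabs (E (S m)) <= R * ((INR m + 1) * (INR m + 1) * R ^ m * (k * k) / R))
      by (apply Rmult_le_compat; auto using Cabs_ge0).
    replace (R * ((INR m + 1) * (INR m + 1) * R ^ m * (k * k) / R))
      with ((INR m + 1) * (INR m + 1) * R ^ m * (k * k)) in HwE by (field; lra).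
    assert ((INR m + 1) * (k * k * Cabs z ^ m) <= (INR m + 1) * (k * k * R ^ m))
      by (apply Rmult_le_compat_l; [lra|]; apply Rmult_le_compat_l; nra).
    assert (0 <= (INR m + 2) * (k * k * R ^ m)) by (apply Rmult_le_pos; nra).
    nra.
Qed.

Definition taylor1_term (b : nat -> Cx) (w z : Cx) (n : nat) : Cx :=
  Cmul (b n) (Cmul (Cscal (INR n) (Csub w z)) (Cpow z (pred n))).

Lemma taylor1_term_S b w z n :
  taylor1_term b w z (S n) = Cmul (Csub w z) (pterm (pderiv b) z n).
Proof. unfold taylor1_term, pterm, pderiv. simpl pred. ceq. Qed.

Lemma abs_summable_taylor1 b w z : radius_ge1 b -> Cabs z < 1 -> abs_summable (taylor1_term b w z).
Proof.
  intros Hb Hz. apply abs_summable_untail.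
  apply (abs_summable_ext _ _ (fun n => eq_sym (taylor1_term_S b w z n))).
  apply abs_summable_scale, radius_ge1_abs_summable; auto using radius_ge1_pderiv.
Qed.

Lemma Cseries_taylor1 b w z : radius_ge1 b -> Cabs z < 1 ->
  Cseries (taylor1_term b w z) = Cmul (Csub w z) (psum (pderiv b) z).
Proof.
  intros Hb Hz. rewrite Cseries_tail by (apply abs_summable_taylor1; auto).
  rewrite (Cseries_ext _ _ (taylor1_term_S b w z)), Cseries_scale
    by (apply radius_ge1_abs_summable; auto using radius_ge1_pderiv).
  unfold taylor1_term, psum. simpl. ceq.
Qed.

Lemma radius_ge1_series_natsq b r : radius_ge1 b -> 0 <= r < 1 ->
  ex_series (fun n => INR n * INR n * Cabs (b n) * r ^ n).
Proof.
  intros Hb Hr.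
  eapply ex_series_ext_R;
    [|apply (radius_ge1_series _ r (radius_ge1_natmul _ (radius_ge1_natmul _ Hb))), Hr].
  intro n. cbv beta. rewrite !Cabs_scal, Rabs_right by (apply Rle_ge, pos_INR). ring.
Qed.

Lemma psum_taylor b r : radius_ge1 b -> 0 < r < 1 -> exists C, 0 <= C /\
  forall w z, Cabs w <= r -> Cabs z <= r ->
  Cabs (Csub (Csub (psum b w) (psum b z)) (Cmul (Csub w z) (psum (pderiv b) z)))
  <= C * Cabs (Csub w z) ^ 2.
Proof.
  intros Hb Hr. pose proof (radius_ge1_series_natsq b r Hb ltac:(lra)) as Hsq.
  set (S2 := Series (fun n => INR n * INR n * Cabs (b n) * r ^ n)).
  exists (2 * Rabs S2 / (r * r)). split; [apply Rdiv_le_0_compat; [pose proof (Rabs_pos S2)|]; nra|].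
  intros w z Hw Hz. assert (Hw1 : Cabs w < 1) by lra. assert (Hz1 : Cabs z < 1) by lra.
  rewrite <- Cseries_taylor1 by auto. unfold psum.
  rewrite <- !Cseries_sub
    by auto using abs_summable_sub, radius_ge1_abs_summable, abs_summable_taylor1.
  set (k := Cabs (Csub w z)). assert (Hk : 0 <= k) by apply Cabs_ge0.
  eapply Rle_trans.
  - apply Cseries_bound with (v := fun n => k ^ 2 / (r * r) * (INR n * INR n * Cabs (b n) * r ^ n)).
    + auto using abs_summable_sub, radius_ge1_abs_summable, abs_summable_taylor1.
    + intro n.
      replace (Csub (Csub (pterm b w n) (pterm b z n)) (taylor1_term b w z n)) with
        (Cmul (b n) (Csub (Csub (Cpow w n) (Cpow z n))
                          (Cmul (Cscal (INR n) (Csub w z)) (Cpow z (pred n)))))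
        by (unfold pterm, taylor1_term; ceq).
      rewrite Cabs_mul. eapply Rle_trans.
      * apply Rmult_le_compat_l; [apply Cabs_ge0|]. apply (pow_taylor w z r n); lra.
      * right. fold k. field. lra.
    + exact (ex_series_scal_l _ _ Hsq).
  - rewrite Series_scal_l. fold S2. pose proof (Rle_abs S2).
    assert (0 <= k ^ 2 / (r * r)) by (apply Rdiv_le_0_compat; nra).
    replace (2 * Rabs S2 / (r * r) * k ^ 2) with (2 * (k ^ 2 / (r * r) * Rabs S2)) by (field; lra).
    nra.
Qed.

Definition is_Cderive (f : R -> Cx) (t : R) (d : Cx) : Prop :=
  is_derive (fun s => Re (f s)) t (Re d) /\ is_derive (fun s => Im (f s)) t (Im d).

Lemma is_derive_eq (f : R -> R) (t a b : R) : is_derive f t a -> a = b -> is_derive f t b.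
Proof. intros H <-. exact H. Qed.

Lemma is_derive_ext_R (f g : R -> R) t a : (forall s, f s = g s) -> is_derive f t a -> is_derive g t a.
Proof. intros E H. exact (@is_derive_ext R_AbsRing R_NormedModule f g t a E H). Qed.

Lemma is_derive_const_R (c : R) t : is_derive (fun _ => c) t 0.
Proof. exact (is_derive_const c t). Qed.

Lemma is_derive_id_R t : is_derive (fun s : R => s) t 1.
Proof. exact (is_derive_id t). Qed.

Lemma is_derive_plus_R (f g : R -> R) t a b : is_derive f t a -> is_derive g t b ->
  is_derive (fun s => f s + g s) t (a + b).
Proof. intros Ha Hb. exact (is_derive_plus f g t a b Ha Hb). Qed.

Lemma is_derive_minus_R (f g : R -> R) t a b : is_derive f t a -> is_derive g t b ->
  is_derive (fun s => f s - g s) t (a - b).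
Proof. intros Ha Hb. exact (is_derive_minus f g t a b Ha Hb). Qed.

Lemma is_derive_opp_R (f : R -> R) t a : is_derive f t a -> is_derive (fun s => - f s) t (- a).
Proof. intro H. exact (is_derive_opp f t a H). Qed.

Lemma is_derive_mult_R (f g : R -> R) t a b : is_derive f t a -> is_derive g t b ->
  is_derive (fun s => f s * g s) t (a * g t + f t * b).
Proof. intros Ha Hb. exact (is_derive_mult f g t a b Ha Hb Rmult_comm). Qed.

Lemma is_Cderive_eq f t d d' : is_Cderive f t d -> d = d' -> is_Cderive f t d'.
Proof. intros H <-. exact H. Qed.

Lemma is_Cderive_const c t : is_Cderive (fun _ => c) t C0.
Proof. split; apply is_derive_const_R. Qed.

Lemma is_Cderive_add f g t df dg : is_Cderive f t df -> is_Cderive g t dg ->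
  is_Cderive (fun s => Cadd (f s) (g s)) t (Cadd df dg).
Proof. intros [F1 F2] [G1 G2]. split; apply is_derive_plus_R; auto. Qed.

Lemma is_Cderive_mul f g t df dg : is_Cderive f t df -> is_Cderive g t dg ->
  is_Cderive (fun s => Cmul (f s) (g s)) t (Cadd (Cmul df (g t)) (Cmul (f t) dg)).
Proof.
  intros [F1 F2] [G1 G2]. split.
  - eapply is_derive_eq; [apply is_derive_minus_R; apply is_derive_mult_R; eauto|]. cunfold. ring.
  - eapply is_derive_eq; [apply is_derive_plus_R; apply is_derive_mult_R; eauto|]. cunfold. ring.
Qed.

Lemma is_Cderive_inv f t df : is_Cderive f t df -> f t <> C0 ->
  is_Cderive (fun s => Cinv (f s)) t (Cscal (-1) (Cmul df (Cinv (Cmul (f t) (f t))))).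
Proof.
  intros [F1 F2] Hf. pose proof (Cnorm2_pos _ Hf) as Hn.
  assert (HN : is_derive (fun s => Re (f s) * Re (f s) + Im (f s) * Im (f s)) t
     (Re df * Re (f t) + Re (f t) * Re df + (Im df * Im (f t) + Im (f t) * Im df)))
    by (apply is_derive_plus_R; apply is_derive_mult_R; auto).
  pose proof (is_derive_inv _ _ _ HN ltac:(unfold Cnorm2 in Hn; lra)) as HI.
  assert (Hsq : Cnorm2 (Cmul (f t) (f t)) <> 0) by (rewrite Cnorm2_mul; nra).
  unfold Cnorm2 in Hn, Hsq. split.
  - apply (is_derive_ext_R (fun s => Re (f s) * / (Re (f s) * Re (f s) + Im (f s) * Im (f s))));
      [reflexivity|].
    eapply is_derive_eq; [apply (is_derive_mult_R _ _ _ _ _ F1 HI)|].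
    cunfold. field. split; lra.
  - apply (is_derive_ext_R (fun s => - Im (f s) * / (Re (f s) * Re (f s) + Im (f s) * Im (f s))));
      [reflexivity|].
    eapply is_derive_eq; [apply (is_derive_mult_R _ _ _ _ _ (is_derive_opp_R _ _ _ F2) HI)|].
    cunfold. field. split; lra.
Qed.

Lemma is_Cderive_eps f t d : is_Cderive f t d -> forall e, 0 < e -> exists del, 0 < del /\
  forall h, h <> 0 -> Rabs h < del -> Cabs (Csub (Cscal (/ h) (Csub (f (t + h)) (f t))) d) < e.
Proof.
  intros [H1 H2] e He.
  apply is_derive_Reals in H1. apply is_derive_Reals in H2.
  destruct (H1 (e / 2) ltac:(lra)) as [d1 Hd1]. destruct (H2 (e / 2) ltac:(lra)) as [d2 Hd2].
  exists (Rmin d1 d2). split; [apply Rmin_pos; apply cond_pos|].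
  intros h Hh Hlt. eapply Rle_lt_trans; [apply Cabs_le_ReIm|].
  specialize (Hd1 h Hh (Rlt_le_trans _ _ _ Hlt (Rmin_l _ _))).
  specialize (Hd2 h Hh (Rlt_le_trans _ _ _ Hlt (Rmin_r _ _))).
  cunfold. unfold Rdiv in *. rewrite !(Rmult_comm (/ h)). lra.
Qed.

Lemma is_Cderive_of_eps f t d : (forall e, 0 < e -> exists del, 0 < del /\
  forall h, h <> 0 -> Rabs h < del -> Cabs (Csub (Cscal (/ h) (Csub (f (t + h)) (f t))) d) < e) ->
  is_Cderive f t d.
Proof.
  intro H. split; apply is_derive_Reals; intros e He; destruct (H e He) as [del [Hd Hb]];
    exists (mkposreal del Hd); intros h Hh Hlt; specialize (Hb h Hh Hlt).
  - eapply Rle_lt_trans; [|exact Hb]. eapply Rle_trans; [|apply Re_le_Cabs].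
    cunfold. right. f_equal. field. exact Hh.
  - eapply Rle_lt_trans; [|exact Hb]. eapply Rle_trans; [|apply Im_le_Cabs].
    cunfold. right. f_equal. field. exact Hh.
Qed.

Definition quad_approx_at (X : Cx -> Cx) (z0 X' : Cx) : Prop :=
  exists rho C, 0 < rho /\ 0 <= C /\ forall w, Cabs (Csub w z0) < rho ->
    Cabs (Csub (Csub (X w) (X z0)) (Cmul (Csub w z0) X')) <= C * Cabs (Csub w z0) ^ 2.

Definition Ccontinuous_at (X : Cx -> Cx) (z0 : Cx) : Prop :=
  forall e, 0 < e -> exists d, 0 < d /\
    forall w, Cabs (Csub w z0) < d -> Cabs (Csub (X w) (X z0)) < e.

Lemma psum_quad_approx b z0 : radius_ge1 b -> Cabs z0 < 1 ->
  quad_approx_at (psum b) z0 (psum (pderiv b) z0).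
Proof.
  intros Hb Hz. pose proof (Cabs_ge0 z0).
  destruct (psum_taylor b ((1 + Cabs z0) / 2) Hb ltac:(lra)) as [C [HC HQ]].
  exists ((1 - Cabs z0) / 2), C. split; [lra|]. split; [exact HC|].
  intros w Hw. apply HQ; [|lra].
  pose proof (Cabs_sub_tri w z0 C0). rewrite !Cabs_sub0 in *. lra.
Qed.

Lemma quad_approx_continuous X z0 X' : quad_approx_at X z0 X' -> Ccontinuous_at X z0.
Proof.
  intros [rho [C [Hrho [HC HX]]]] e He.
  set (B := Cabs X'). assert (HB : 0 <= B) by apply Cabs_ge0.
  set (L := B + C * rho + 1). assert (HL : 0 < L) by (unfold L; nra).
  exists (Rmin rho (e / L)). split; [apply Rmin_pos; auto; apply Rdiv_lt_0_compat; lra|].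
  intros w Hw.
  assert (Hw1 : Cabs (Csub w z0) < rho) by (eapply Rlt_le_trans; [exact Hw|apply Rmin_l]).
  assert (Hw2 : Cabs (Csub w z0) < e / L) by (eapply Rlt_le_trans; [exact Hw|apply Rmin_r]).
  specialize (HX w Hw1).
  set (k := Cabs (Csub w z0)) in *. assert (Hk : 0 <= k) by apply Cabs_ge0.
  replace (Csub (X w) (X z0))
    with (Cadd (Csub (Csub (X w) (X z0)) (Cmul (Csub w z0) X')) (Cmul (Csub w z0) X')) by ceq.
  eapply Rle_lt_trans; [apply Cabs_add|]. rewrite Cabs_mul. fold k B.
  assert (0 <= C * k * (rho - k)) by (apply Rmult_le_pos; [apply Rmult_le_pos|]; lra).
  assert (C * k ^ 2 <= C * rho * k) by (simpl; nra).
  assert (k * L < e) by (apply (Rmult_lt_reg_r (/ L)); [apply Rinv_0_lt_compat; lra|];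
                         replace (k * L * / L) with k by (field; lra); exact Hw2).
  unfold L in *. nra.
Qed.

Lemma quad_approx_quotient X z0 X' w D g' h C : h <> 0 -> Csub w z0 = Cscal h D ->
  Cabs (Csub (Csub (X w) (X z0)) (Cmul (Csub w z0) X')) <= C * Cabs (Csub w z0) ^ 2 ->
  Cabs (Csub (Cscal (/ h) (Csub (X w) (X z0))) (Cmul X' g'))
  <= C * Rabs h * (Cabs D * Cabs D) + Cabs X' * Cabs (Csub D g').
Proof.
  intros Hh Hwz HX. pose proof (Rabs_pos_lt h Hh).
  replace (Csub (Cscal (/ h) (Csub (X w) (X z0))) (Cmul X' g'))
    with (Cadd (Cscal (/ h) (Csub (Csub (X w) (X z0)) (Cmul (Csub w z0) X')))
               (Cmul X' (Csub D g')))
    by (rewrite Hwz; cgen; cdestr; cunfold; f_equal; field; exact Hh).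
  eapply Rle_trans; [apply Cabs_add|]. rewrite Cabs_scal, Cabs_mul. apply Rplus_le_compat_r.
  assert (Hk : Cabs (Csub w z0) = Rabs h * Cabs D) by (rewrite Hwz; apply Cabs_scal).
  rewrite Hk in HX. rewrite Rabs_inv.
  apply (Rmult_le_reg_l (Rabs h)); [lra|]. rewrite <- Rmult_assoc, Rinv_r, Rmult_1_l by lra.
  eapply Rle_trans; [exact HX|]. right. ring.
Qed.

(* With [g (t + h) - g t = h D] and [D -> g'], the quadratic remainder of [X] is [O(h^2)]. *)
Lemma is_Cderive_comp X X' g t g' : quad_approx_at X (g t) X' -> is_Cderive g t g' ->
  is_Cderive (fun s => X (g s)) t (Cmul X' g').
Proof.
  intros [rho [C [Hrho [HC HX]]]] Hg. apply is_Cderive_of_eps. intros e He.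
  set (A := Cabs g'). set (B := Cabs X').
  assert (HA : 0 <= A) by apply Cabs_ge0. assert (HB : 0 <= B) by apply Cabs_ge0.
  set (eta := Rmin 1 (e / (2 * (B + 1)))).
  assert (Heta : 0 < eta) by (apply Rmin_pos; [lra|apply Rdiv_lt_0_compat; lra]).
  assert (HBeta : B * eta < e / 2).
  { apply Rle_lt_trans with (B * (e / (2 * (B + 1)))); [apply Rmult_le_compat_l, Rmin_r; lra|].
    apply (Rmult_lt_reg_r (2 * (B + 1))); [lra|].
    replace (B * (e / (2 * (B + 1))) * (2 * (B + 1))) with (B * e) by (field; lra). nra. }
  destruct (is_Cderive_eps g t g' Hg eta Heta) as [d1 [Hd1 Hb1]].
  set (M := (C + 1) * ((A + 1) * (A + 1))). assert (HM : 0 < M) by (unfold M; nra).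
  exists (Rmin d1 (Rmin (rho / (A + 1)) (e / (2 * M)))).
  split; [repeat apply Rmin_pos; auto; apply Rdiv_lt_0_compat; lra|].
  intros h Hh Hlt.
  pose proof (Rmin_l d1 (Rmin (rho / (A + 1)) (e / (2 * M)))).
  pose proof (Rmin_l (rho / (A + 1)) (e / (2 * M))).
  pose proof (Rmin_r (rho / (A + 1)) (e / (2 * M))).
  pose proof (Rmin_r d1 (Rmin (rho / (A + 1)) (e / (2 * M)))).
  specialize (Hb1 h Hh ltac:(lra)).
  set (D := Cscal (/ h) (Csub (g (t + h)) (g t))) in *.
  assert (HD : Cabs D <= A + 1).
  { pose proof (Cabs_sub_tri D g' C0). rewrite !Cabs_sub0 in *.
    assert (eta <= 1) by apply Rmin_l. unfold A. lra. }
  pose proof (Cabs_ge0 D). pose proof (Rabs_pos_lt h Hh).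
  assert (Hwz : Csub (g (t + h)) (g t) = Cscal h D)
    by (unfold D; cgen; cdestr; cunfold; f_equal; field; exact Hh).
  assert (Hclose : Cabs (Csub (g (t + h)) (g t)) < rho).
  { rewrite Hwz, Cabs_scal. apply Rle_lt_trans with (Rabs h * (A + 1)); [nra|].
    apply (Rmult_lt_reg_r (/ (A + 1))); [apply Rinv_0_lt_compat; lra|].
    replace (Rabs h * (A + 1) * / (A + 1)) with (Rabs h) by (field; lra). lra. }
  eapply Rle_lt_trans; [apply (quad_approx_quotient X _ _ _ D g' h C Hh Hwz (HX _ Hclose))|].
  fold B. assert (C * Rabs h * (Cabs D * Cabs D) <= Rabs h * M).
  { unfold M. assert (Cabs D * Cabs D <= (A + 1) * (A + 1)) by nra.
    assert (0 <= C * Rabs h) by nra. nra. }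
  assert (Rabs h * M < e / 2).
  { apply (Rmult_lt_reg_r (/ M)); [apply Rinv_0_lt_compat; lra|].
    replace (Rabs h * M * / M) with (Rabs h) by (field; lra).
    replace (e / 2 * / M) with (e / (2 * M)) by (field; lra). lra. }
  assert (B * Cabs (Csub D g') <= B * eta) by (apply Rmult_le_compat_l; lra).
  lra.
Qed.

Definition Ccontinuous_2d (F : R -> R -> Cx) (x y : R) : Prop :=
  continuity_2d_pt (fun u v => Re (F u v)) x y /\ continuity_2d_pt (fun u v => Im (F u v)) x y.

Lemma Ccontinuous_2d_const c x y : Ccontinuous_2d (fun _ _ => c) x y.
Proof. split; apply continuity_2d_pt_const. Qed.

Lemma Ccontinuous_2d_add F G x y : Ccontinuous_2d F x y -> Ccontinuous_2d G x y ->
  Ccontinuous_2d (fun u v => Cadd (F u v) (G u v)) x y.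
Proof. intros [F1 F2] [G1 G2]. split; apply continuity_2d_pt_plus; auto. Qed.

Lemma Ccontinuous_2d_mul F G x y : Ccontinuous_2d F x y -> Ccontinuous_2d G x y ->
  Ccontinuous_2d (fun u v => Cmul (F u v) (G u v)) x y.
Proof.
  intros [F1 F2] [G1 G2]. split.
  - apply continuity_2d_pt_minus; apply continuity_2d_pt_mult; auto.
  - apply continuity_2d_pt_plus; apply continuity_2d_pt_mult; auto.
Qed.

Lemma Ccontinuous_2d_scal c F x y : Ccontinuous_2d F x y ->
  Ccontinuous_2d (fun u v => Cscal c (F u v)) x y.
Proof. intros [F1 F2]. split; apply continuity_2d_pt_mult; auto; apply continuity_2d_pt_const. Qed.

Lemma Ccontinuous_2d_inv F x y : Ccontinuous_2d F x y -> F x y <> C0 ->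
  Ccontinuous_2d (fun u v => Cinv (F u v)) x y.
Proof.
  intros [F1 F2] Hn. pose proof (Cnorm2_pos _ Hn).
  assert (HN : continuity_2d_pt (fun u v => Cnorm2 (F u v)) x y)
    by (apply continuity_2d_pt_plus; apply continuity_2d_pt_mult; auto).
  split; apply continuity_2d_pt_mult; auto using continuity_2d_pt_opp;
    apply continuity_2d_pt_inv; auto; lra.
Qed.

Lemma Ccontinuous_2d_comp X G x y : Ccontinuous_at X (G x y) -> Ccontinuous_2d G x y ->
  Ccontinuous_2d (fun u v => X (G u v)) x y.
Proof.
  intros HX [G1 G2].
  assert (key : forall eps : posreal,
             locally_2d (fun u v => Cabs (Csub (X (G u v)) (X (G x y))) < eps) x y).
  { intro eps. destruct (HX eps (cond_pos eps)) as [d [Hd Hw]].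
    pose proof (G1 (mkposreal (d / 2) ltac:(lra))) as L1.
    pose proof (G2 (mkposreal (d / 2) ltac:(lra))) as L2.
    eapply locally_2d_impl; [|apply (locally_2d_and _ _ _ _ L1 L2)].
    apply locally_2d_forall. intros u v [H1 H2]. simpl in H1, H2. apply Hw.
    eapply Rle_lt_trans; [apply Cabs_le_ReIm|]. cunfold. lra. }
  split; intro eps; eapply locally_2d_impl; try apply (key eps);
    apply locally_2d_forall; intros u v H; eapply Rle_lt_trans; try exact H.
  - exact (Re_le_Cabs (Csub (X (G u v)) (X (G x y)))).
  - exact (Im_le_Cabs (Csub (X (G u v)) (X (G x y)))).
Qed.

Definition polar (r t : R) : Cx := (r * cos t, r * sin t).
Definition expi (t : R) : Cx := (cos t, sin t).

Lemma Cnorm2_polar r t : Cnorm2 (polar r t) = r * r.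
Proof.
  unfold polar; cunfold. rewrite <- (Rmult_1_r (r * r)), <- (sin2_cos2 t). unfold Rsqr. ring.
Qed.

Lemma Cabs_polar r t : Cabs (polar r t) = Rabs r.
Proof. unfold Cabs. rewrite Cnorm2_polar. apply sqrt_Rsqr_abs. Qed.

Lemma polar_0 t : polar 0 t = C0.
Proof. unfold polar, C0. f_equal; ring. Qed.

Lemma polar_2PI r : polar r (2 * PI) = polar r 0.
Proof. unfold polar. rewrite cos_2PI, sin_2PI, cos_0, sin_0. reflexivity. Qed.

Lemma Ccontinuous_2d_polar x y : Ccontinuous_2d polar x y.
Proof.
  split; apply continuity_2d_pt_mult; try apply continuity_2d_pt_id1;
    apply continuity_1d_2d_pt_comp; auto using continuity_2d_pt_id2, continuity_cos, continuity_sin.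
Qed.

Lemma Ccontinuous_2d_expi x y : Ccontinuous_2d (fun _ v => expi v) x y.
Proof.
  split; apply continuity_1d_2d_pt_comp; auto using continuity_2d_pt_id2, continuity_cos, continuity_sin.
Qed.

Lemma is_Cderive_polar_r r t : is_Cderive (fun s => polar s t) r (expi t).
Proof.
  split; unfold polar, expi; cunfold.
  - eapply is_derive_eq; [apply (is_derive_mult_R (fun s => s) (fun _ => cos t));
      [apply is_derive_id_R|apply is_derive_const_R]|]. ring.
  - eapply is_derive_eq; [apply (is_derive_mult_R (fun s => s) (fun _ => sin t));
      [apply is_derive_id_R|apply is_derive_const_R]|]. ring.
Qed.

Lemma is_Cderive_polar_t r t : is_Cderive (fun s => polar r s) t (Cmul Ci (polar r t)).
Proof.
  split; unfold polar; cunfold.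
  - eapply is_derive_eq;
      [apply (is_derive_mult_R (fun _ => r)), is_derive_cos; apply is_derive_const_R|].
    ring.
  - eapply is_derive_eq;
      [apply (is_derive_mult_R (fun _ => r)), is_derive_sin; apply is_derive_const_R|].
    ring.
Qed.

(* Holomorphy on the unit disk, encoded by exactly what the mean value argument
   below uses: a chain rule along differentiable real paths inside [D], and joint
   continuity of [F] and of its derivative [F'] in polar coordinates. *)
Definition holomorphic_on_D (F : Cx -> Cx) : Prop :=
  exists F' : Cx -> Cx,
    (forall g t g', is_Cderive g t g' -> Cabs (g t) < 1 ->
       is_Cderive (fun s => F (g s)) t (Cmul (F' (g t)) g')) /\
    (forall r t, Rabs r < 1 ->
       Ccontinuous_2d (fun u v => F (polar u v)) r t /\
       Ccontinuous_2d (fun u v => F' (polar u v)) r t).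

Lemma holomorphic_const c : holomorphic_on_D (fun _ => c).
Proof.
  exists (fun _ => C0). split.
  - intros g t g' _ _. eapply is_Cderive_eq; [apply is_Cderive_const|]. ceq.
  - intros r t _. split; apply Ccontinuous_2d_const.
Qed.

Lemma holomorphic_id : holomorphic_on_D (fun z => z).
Proof.
  exists (fun _ => C1). split.
  - intros g t g' Hg _. eapply is_Cderive_eq; [exact Hg|]. ceq.
  - intros r t _. split; [apply Ccontinuous_2d_polar|apply Ccontinuous_2d_const].
Qed.

Lemma holomorphic_add F G : holomorphic_on_D F -> holomorphic_on_D G ->
  holomorphic_on_D (fun z => Cadd (F z) (G z)).
Proof.
  intros [F' [HF CF]] [G' [HG CG]]. exists (fun z => Cadd (F' z) (G' z)). split.
  - intros g t g' Hg Hgt. eapply is_Cderive_eq;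
      [exact (is_Cderive_add _ _ _ _ _ (HF g t g' Hg Hgt) (HG g t g' Hg Hgt))|ceq].
  - intros r t Hr. destruct (CF r t Hr), (CG r t Hr). split; apply Ccontinuous_2d_add; auto.
Qed.

Lemma holomorphic_mul F G : holomorphic_on_D F -> holomorphic_on_D G ->
  holomorphic_on_D (fun z => Cmul (F z) (G z)).
Proof.
  intros [F' [HF CF]] [G' [HG CG]].
  exists (fun z => Cadd (Cmul (F' z) (G z)) (Cmul (F z) (G' z))). split.
  - intros g t g' Hg Hgt. eapply is_Cderive_eq;
      [exact (is_Cderive_mul _ _ _ _ _ (HF g t g' Hg Hgt) (HG g t g' Hg Hgt))|ceq].
  - intros r t Hr. destruct (CF r t Hr), (CG r t Hr).
    split; repeat apply Ccontinuous_2d_add || apply Ccontinuous_2d_mul; auto.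
Qed.

Lemma holomorphic_inv F : holomorphic_on_D F -> (forall z, Cabs z < 1 -> F z <> C0) ->
  holomorphic_on_D (fun z => Cinv (F z)).
Proof.
  intros [F' [HF CF]] Hnz.
  exists (fun z => Cscal (-1) (Cmul (F' z) (Cinv (Cmul (F z) (F z))))). split.
  - intros g t g' Hg Hgt. eapply is_Cderive_eq;
      [exact (is_Cderive_inv _ _ _ (HF g t g' Hg Hgt) (Hnz _ Hgt))|ceq].
  - intros r t Hr. destruct (CF r t Hr) as [C1F C1F'].
    assert (Hp : F (polar r t) <> C0) by (apply Hnz; rewrite Cabs_polar; exact Hr).
    split; [apply Ccontinuous_2d_inv; auto|].
    apply Ccontinuous_2d_scal, Ccontinuous_2d_mul; auto.
    apply Ccontinuous_2d_inv; [apply Ccontinuous_2d_mul; auto|apply Cmul_neq0; auto].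
Qed.

Lemma holomorphic_psum b : radius_ge1 b -> holomorphic_on_D (psum b).
Proof.
  intro Hb. exists (psum (pderiv b)). split.
  - intros g t g' Hg Hgt. apply is_Cderive_comp; auto. apply psum_quad_approx; auto.
  - intros r t Hr. rewrite <- (Cabs_polar r t) in Hr.
    split; apply Ccontinuous_2d_comp; auto using Ccontinuous_2d_polar;
      eapply quad_approx_continuous, psum_quad_approx; auto using radius_ge1_pderiv.
Qed.

Lemma minus_R (a b : R) : minus a b = a - b.
Proof. reflexivity. Qed.

Lemma is_RInt_cos_period : is_RInt cos 0 (2 * PI) 0.
Proof.
  assert (H : is_RInt cos 0 (2 * PI) (minus (sin (2 * PI)) (sin 0))).
  { apply (is_RInt_derive sin cos); intros; [apply is_derive_sin|].
    apply continuity_pt_filterlim, continuity_cos. }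
  rewrite minus_R, sin_2PI, sin_0, Rminus_0_r in H.
  exact H.
Qed.

Lemma is_RInt_sin_period : is_RInt sin 0 (2 * PI) 0.
Proof.
  assert (H : is_RInt sin 0 (2 * PI) (minus (- cos (2 * PI)) (- cos 0))).
  { apply (is_RInt_derive (fun x => - cos x) sin); intros.
    - eapply is_derive_eq; [apply is_derive_opp_R, is_derive_cos|]. ring.
    - apply continuity_pt_filterlim, continuity_sin. }
  rewrite minus_R, cos_2PI, cos_0, Rminus_diag in H.
  exact H.
Qed.

Lemma is_RInt_scal_R (f : R -> R) a b l k : is_RInt f a b l -> is_RInt (fun t => k * f t) a b (k * l).
Proof. intro H. exact (@is_RInt_scal R_NormedModule f a b k l H). Qed.

Lemma is_RInt_minus_R (f g : R -> R) a b l1 l2 : is_RInt f a b l1 -> is_RInt g a b l2 ->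
  is_RInt (fun t => f t - g t) a b (l1 - l2).
Proof. intros H1 H2. exact (@is_RInt_minus R_NormedModule f g a b l1 l2 H1 H2). Qed.

Lemma is_RInt_ext_R (f g : R -> R) a b l : (forall t, f t = g t) -> is_RInt f a b l -> is_RInt g a b l.
Proof. intros E H. exact (@is_RInt_ext R_NormedModule f g a b l (fun t _ => E t) H). Qed.

Lemma continuity_2d_pt_snd f x y : continuity_2d_pt f x y -> continuous (fun v => f x v) y.
Proof.
  intro H. apply continuity_pt_filterlim. intros eps Heps.
  destruct (H (mkposreal eps Heps)) as [d Hd]. exists d. split; [apply cond_pos|].
  intros v [_ Hv]. simpl in *. unfold R_dist in *. apply Hd; auto.
  rewrite Rminus_diag, Rabs_R0. apply cond_pos.
Qed.

Section CircleMean.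

Variables F F' : Cx -> Cx.
Hypothesis Hder : forall g t g', is_Cderive g t g' -> Cabs (g t) < 1 ->
  is_Cderive (fun s => F (g s)) t (Cmul (F' (g t)) g').
Hypothesis Hcont : forall r t, Rabs r < 1 -> Ccontinuous_2d (fun u v => F' (polar u v)) r t.
Hypothesis HF0 : F C0 = C0.

Let f r t := Re (F (polar r t)).
Let df r t := Re (Cmul (F' (polar r t)) (expi t)).

Lemma circle_derive_r r t : Rabs r < 1 -> is_derive (fun u => f u t) r (df r t).
Proof.
  intro Hr. rewrite <- (Cabs_polar r t) in Hr. exact (proj1 (Hder _ r _ (is_Cderive_polar_r r t) Hr)).
Qed.

Lemma circle_derive_t r t : Rabs r < 1 ->
  is_Cderive (fun s => F (polar r s)) t (Cmul (F' (polar r t)) (Cmul Ci (polar r t))).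
Proof. intro Hr. rewrite <- (Cabs_polar r t) in Hr. exact (Hder _ t _ (is_Cderive_polar_t r t) Hr). Qed.

Lemma circle_continuity_df r t : Rabs r < 1 -> continuity_2d_pt df r t.
Proof.
  intro Hr. exact (proj1 (Ccontinuous_2d_mul _ _ _ _ (Hcont r t Hr) (Ccontinuous_2d_expi r t))).
Qed.

Lemma circle_ex_RInt r : Rabs r < 1 -> ex_RInt (f r) 0 (2 * PI).
Proof.
  intro Hr. apply (@ex_RInt_continuous R_CompleteNormedModule). intros t _.
  apply (@ex_derive_continuous R_AbsRing R_NormedModule).
  eexists. exact (proj1 (circle_derive_t r t Hr)).
Qed.

Lemma circle_derive_mean x : Rabs x < 1 ->
  is_derive (fun r => RInt (f r) 0 (2 * PI)) x (RInt (df x) 0 (2 * PI)).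
Proof.
  intro Hx. assert (Hd : 0 < (1 - Rabs x) / 2) by lra.
  assert (Hnear : forall y, Rabs (y - x) < (1 - Rabs x) / 2 -> Rabs y < 1)
    by (intros y Hy; pose proof (Rabs_triang_inv y x); lra).
  replace (RInt (df x) 0 (2 * PI)) with (RInt (fun t => Derive (fun u => f u t) x) 0 (2 * PI))
    by (apply RInt_ext; intros t _; apply is_derive_unique, circle_derive_r, Hx).
  apply is_derive_RInt_param.
  - exists (mkposreal _ Hd). intros y Hy t _. eexists. apply circle_derive_r, Hnear, Hy.
  - intros t _. apply continuity_2d_pt_ext_loc with df; [|apply circle_continuity_df, Hx].
    exists (mkposreal _ Hd). intros u v Hu _. symmetry.
    apply is_derive_unique, circle_derive_r, Hnear, Hu.
  - exists (mkposreal _ Hd). intros y Hy. apply circle_ex_RInt, Hnear, Hy.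
Qed.

(* For [x > 0], [x * df x] is the [t]-derivative of [Im (F (polar x t))], a periodic function. *)
Lemma circle_RInt_df x : 0 <= x < 1 -> RInt (df x) 0 (2 * PI) = 0.
Proof.
  intro Hx. assert (Hx1 : Rabs x < 1) by (rewrite Rabs_right; lra).
  apply (@is_RInt_unique R_CompleteNormedModule).
  destruct (Req_dec x 0) as [->|Hx0].
  - set (c := F' (polar 0 0)).
    pose proof (is_RInt_scal_R _ _ _ _ (Re c) is_RInt_cos_period) as Hc.
    pose proof (is_RInt_scal_R _ _ _ _ (Im c) is_RInt_sin_period) as Hs.
    pose proof (is_RInt_minus_R _ _ _ _ _ _ Hc Hs) as H.
    rewrite !Rmult_0_r, Rminus_0_r in H.
    eapply is_RInt_ext_R; [|exact H]. intro t. unfold df, c. rewrite !polar_0.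
    unfold expi; cunfold. ring.
  - set (gI := fun t => Im (F (polar x t))).
    assert (H : is_RInt (fun t => x * df x t) 0 (2 * PI) (minus (gI (2 * PI)) (gI 0))).
    { apply (is_RInt_derive gI); intros t _.
      - eapply is_derive_eq; [exact (proj2 (circle_derive_t x t Hx1))|].
        unfold df, polar, expi, Ci; cunfold. ring.
      - apply (continuity_2d_pt_snd (fun u v => x * df u v)).
        apply continuity_2d_pt_mult; [apply continuity_2d_pt_const|apply circle_continuity_df, Hx1]. }
    unfold gI in H. rewrite polar_2PI, minus_R, Rminus_diag in H.
    apply (is_RInt_scal_R _ _ _ _ (/ x)) in H. rewrite Rmult_0_r in H.
    eapply is_RInt_ext_R; [|exact H]. intro t. cbv beta. field. exact Hx0.
Qed.

Lemma circle_mean_zero_of_derivative rho : 0 <= rho < 1 -> is_RInt (f rho) 0 (2 * PI) 0.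
Proof.
  intro Hr. assert (Hr1 : Rabs rho < 1) by (rewrite Rabs_right; lra).
  set (K := fun r => RInt (f r) 0 (2 * PI)).
  assert (K0 : K 0 = 0).
  { unfold K. apply (@is_RInt_unique R_CompleteNormedModule).
    pose proof (is_RInt_scal_R _ _ _ _ 0 is_RInt_cos_period) as H. rewrite Rmult_0_r in H.
    eapply is_RInt_ext_R; [|exact H]. intro t. unfold f. rewrite polar_0, HF0. cunfold. ring. }
  assert (Kr : K rho = 0).
  { destruct (Req_dec rho 0) as [->|E]; [exact K0|].
    rewrite <- K0. symmetry. apply (@eq_is_derive R_NormedModule K 0 rho); [|lra].
    intros t Ht. apply (is_derive_eq _ t (RInt (df t) 0 (2 * PI))).
    - apply circle_derive_mean. rewrite Rabs_right; lra.
    - apply circle_RInt_df. lra. }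
  pose proof (RInt_correct _ _ _ (circle_ex_RInt rho Hr1)) as H.
  fold (K rho) in H. rewrite Kr in H. exact H.
Qed.

End CircleMean.

Lemma circle_mean_zero F rho : holomorphic_on_D F -> F C0 = C0 -> 0 <= rho < 1 ->
  is_RInt (fun t => Re (F (polar rho t))) 0 (2 * PI) 0.
Proof.
  intros [F' [Hder Hcont]] HF0 Hr.
  exact (circle_mean_zero_of_derivative F F' Hder (fun r t Hr => proj2 (Hcont r t Hr)) HF0 rho Hr).
Qed.

Definition quadratic (q0 q1 q2 z : Cx) : Cx := Cadd q0 (Cadd (Cmul q1 z) (Cmul q2 (Cmul z z))).

Definition caratheodory (c1 c2 z w : Cx) : Cx :=
  Cadd C1 (Cadd (Cmul c1 z) (Cadd (Cmul c2 (Cmul z z)) (Cmul (Cmul z (Cmul z z)) w))).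

Section ToeplitzIdentity.

Variables (n : R) (c1 c2 q0 q1 q2 : Cx).

(* On the circle [|z|^2 = n]: [|quadratic q0 q1 q2 z|^2 = al + 2 Re (be z) + 2 Re (de z^2)]. *)
Let al := Cnorm2 q0 + n * Cnorm2 q1 + n * n * Cnorm2 q2.
Let be := Cadd (Cmul (Cconj q0) q1) (Cscal n (Cmul (Cconj q1) q2)).
Let de := Cmul (Cconj q0) q2.

Definition toeplitz_form : R :=
  al + n * Re (Cmul (Cconj be) c1) + n * n * Re (Cmul (Cconj de) c2).

Definition toeplitz_remainder (z w : Cx) : Cx :=
  let p1 := Cadd (caratheodory c1 c2 z w) C1 in
  Cadd (Cmul (RtoC al) (Cadd c1 (Cadd (Cmul c2 z) (Cmul (Cmul z z) w))))
  (Cadd (Cadd (Cmul be p1) (Cmul (RtoC n) (Cmul (Cconj be) (Cadd c2 (Cmul z w)))))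
        (Cadd (Cmul de (Cmul z p1))
              (Cadd (Cmul (RtoC n) (Cmul de (Cconj c1))) (Cmul (RtoC (n * n)) (Cmul (Cconj de) w))))).

End ToeplitzIdentity.

Lemma quadratic_norm q0 q1 q2 z : let n := Cnorm2 z in
  Cnorm2 (quadratic q0 q1 q2 z) =
  Cnorm2 q0 + n * Cnorm2 q1 + n * n * Cnorm2 q2
  + 2 * Re (Cmul (Cadd (Cmul (Cconj q0) q1) (Cscal n (Cmul (Cconj q1) q2))) z)
  + 2 * Re (Cmul (Cmul (Cconj q0) q2) (Cmul z z)).
Proof. unfold quadratic. cdestr; cunfold. ring. Qed.

(* Split by linearity in [al], [be] and [de] to keep the [ring] problems small. *)
Lemma caratheodory_Re_scal c1 c2 z w (al : R) :
  Re (caratheodory c1 c2 z w) * al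
  = al + Re (Cmul z (Cmul (RtoC al) (Cadd c1 (Cadd (Cmul c2 z) (Cmul (Cmul z z) w))))).
Proof. unfold caratheodory. cbv zeta. cdestr; cunfold. ring. Qed.

Lemma caratheodory_Re_lin c1 c2 z w be : let n := Cnorm2 z in
  Re (caratheodory c1 c2 z w) * (2 * Re (Cmul be z))
  = n * Re (Cmul (Cconj be) c1)
    + Re (Cmul z (Cadd (Cmul be (Cadd (caratheodory c1 c2 z w) C1))
                       (Cmul (RtoC n) (Cmul (Cconj be) (Cadd c2 (Cmul z w)))))).
Proof. unfold caratheodory. cbv zeta. cdestr; cunfold. ring. Qed.

Lemma caratheodory_Re_quad c1 c2 z w de : let n := Cnorm2 z in
  Re (caratheodory c1 c2 z w) * (2 * Re (Cmul de (Cmul z z)))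
  = n * n * Re (Cmul (Cconj de) c2)
    + Re (Cmul z (Cadd (Cmul de (Cmul z (Cadd (caratheodory c1 c2 z w) C1)))
                       (Cadd (Cmul (RtoC n) (Cmul de (Cconj c1)))
                             (Cmul (RtoC (n * n)) (Cmul (Cconj de) w))))).
Proof. unfold caratheodory. cbv zeta. cdestr; cunfold. ring. Qed.

Lemma Re_Cmul_Cadd z u v : Re (Cmul z (Cadd u v)) = Re (Cmul z u) + Re (Cmul z v).
Proof. cdestr; cunfold; ring. Qed.

Lemma toeplitz_pointwise c1 c2 q0 q1 q2 z w :
  Re (caratheodory c1 c2 z w) * Cnorm2 (quadratic q0 q1 q2 z)
  = toeplitz_form (Cnorm2 z) c1 c2 q0 q1 q2
    + Re (Cmul z (toeplitz_remainder (Cnorm2 z) c1 c2 q0 q1 q2 z w)).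
Proof.
  set (n := Cnorm2 z). set (P := Re (caratheodory c1 c2 z w)).
  set (al := Cnorm2 q0 + n * Cnorm2 q1 + n * n * Cnorm2 q2).
  set (be := Cadd (Cmul (Cconj q0) q1) (Cscal n (Cmul (Cconj q1) q2))).
  set (de := Cmul (Cconj q0) q2).
  transitivity (P * al + P * (2 * Re (Cmul be z)) + P * (2 * Re (Cmul de (Cmul z z))));
    [rewrite quadratic_norm; cbv zeta; unfold al, be, de, n; ring|].
  unfold P. rewrite caratheodory_Re_scal, caratheodory_Re_lin, caratheodory_Re_quad. fold n.
  unfold toeplitz_form, toeplitz_remainder. cbv zeta. fold al be de. rewrite !Re_Cmul_Cadd. ring.
Qed.

Ltac holomorphic :=
  repeat match goal with
  | |- holomorphic_on_D (fun _ => ?c) => apply (holomorphic_const c)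
  | |- holomorphic_on_D (fun z => z) => apply holomorphic_id
  | |- holomorphic_on_D (fun z => Cadd _ _) => apply holomorphic_add
  | |- holomorphic_on_D (fun z => Cmul _ _) => apply holomorphic_mul
  | |- holomorphic_on_D (Cadd ?c) => apply (holomorphic_add (fun _ => c) (fun z => z))
  | |- holomorphic_on_D (Cmul ?c) => apply (holomorphic_mul (fun _ => c) (fun z => z))
  | H : holomorphic_on_D ?f |- holomorphic_on_D ?f => exact H
  end.

Lemma is_RInt_plus_R (f g : R -> R) a b l1 l2 : is_RInt f a b l1 -> is_RInt g a b l2 ->
  is_RInt (fun t => f t + g t) a b (l1 + l2).
Proof. intros H1 H2. exact (@is_RInt_plus R_NormedModule f g a b l1 l2 H1 H2). Qed.

Lemma is_RInt_const_period (K : R) : is_RInt (fun _ => K) 0 (2 * PI) (2 * PI * K).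
Proof.
  replace (2 * PI * K) with (scal (2 * PI - 0) K) by (rewrite Rminus_0_r; reflexivity).
  exact (@is_RInt_const R_NormedModule 0 (2 * PI) K).
Qed.

(* [toeplitz_form (rho^2) c1 c2 q] is the mean of [Re p * |quadratic q|^2] over [|z| = rho]. *)
Lemma toeplitz_form_circle_nonneg c1 c2 h rho q0 q1 q2 : holomorphic_on_D h ->
  (forall z, Cabs z < 1 -> 0 < Re (caratheodory c1 c2 z (h z))) -> 0 < rho < 1 ->
  0 <= toeplitz_form (rho * rho) c1 c2 q0 q1 q2.
Proof.
  intros Hh Hpos Hr.
  set (K := toeplitz_form (rho * rho) c1 c2 q0 q1 q2).
  set (F := fun z => Cmul z (toeplitz_remainder (rho * rho) c1 c2 q0 q1 q2 z (h z))).
  assert (HF : holomorphic_on_D F)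
    by (unfold F, toeplitz_remainder, caratheodory; cbv zeta; holomorphic).
  pose proof (circle_mean_zero F rho HF ltac:(unfold F; ceq) ltac:(lra)) as Hmean.
  pose proof (is_RInt_plus_R _ _ _ _ _ _ (is_RInt_const_period K) Hmean) as Hint.
  rewrite Rplus_0_r in Hint.
  assert (Hle : 0 <= 2 * PI * K).
  { apply (is_RInt_ge_0 (fun t => Re (caratheodory c1 c2 (polar rho t) (h (polar rho t)))
                                  * Cnorm2 (quadratic q0 q1 q2 (polar rho t))) 0 (2 * PI)).
    - pose proof PI_RGT_0. lra.
    - eapply is_RInt_ext_R; [|exact Hint]. intro t. cbv beta.
      rewrite toeplitz_pointwise, Cnorm2_polar. reflexivity.
    - intros t _. apply Rmult_le_pos; [|apply Cnorm2_ge0].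
      left. apply Hpos. rewrite Cabs_polar, Rabs_right; lra. }
  pose proof PI_RGT_0. nra.
Qed.

Lemma toeplitz_form_scale rho c1 c2 x0 x1 x2 : 0 < rho ->
  toeplitz_form (rho * rho) c1 c2 x0 (Cscal (/ rho) x1) (Cscal (/ (rho * rho)) x2)
  = (Cnorm2 x0 + Cnorm2 x1 + Cnorm2 x2)
    + rho * Re (Cmul (Cconj (Cadd (Cmul (Cconj x0) x1) (Cmul (Cconj x1) x2))) c1)
    + rho * rho * Re (Cmul (Cconj (Cmul (Cconj x0) x2)) c2).
Proof. intro Hr. unfold toeplitz_form. cbv zeta. cdestr. cunfold. field. lra. Qed.

Lemma toeplitz_form_1 c1 c2 x0 x1 x2 :
  toeplitz_form 1 c1 c2 x0 x1 x2
  = (Cnorm2 x0 + Cnorm2 x1 + Cnorm2 x2)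
    + Re (Cmul (Cconj (Cadd (Cmul (Cconj x0) x1) (Cmul (Cconj x1) x2))) c1)
    + Re (Cmul (Cconj (Cmul (Cconj x0) x2)) c2).
Proof. unfold toeplitz_form. cbv zeta. cdestr. cunfold. ring. Qed.

Lemma quadratic_nonneg_at_1 A B C :
  (forall rho, 0 < rho < 1 -> 0 <= A + rho * B + rho * rho * C) -> 0 <= A + B + C.
Proof.
  intro H. destruct (Rle_lt_dec 0 (A + B + C)) as [|Hneg]; [assumption|exfalso].
  set (L := Rabs B + 2 * Rabs C + 1).
  assert (HL : 1 <= L) by (unfold L; pose proof (Rabs_pos B); pose proof (Rabs_pos C); lra).
  set (d := Rmin (1 / 2) (- (A + B + C) / (2 * L))).
  assert (Hd0 : 0 < d) by (apply Rmin_pos; [lra|apply Rdiv_lt_0_compat; lra]).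
  assert (Hd1 : d <= 1 / 2) by apply Rmin_l.
  assert (HdL : d * L <= - (A + B + C) / 2).
  { assert (Hdr : d <= - (A + B + C) / (2 * L)) by apply Rmin_r.
    apply (Rmult_le_compat_r L) in Hdr; [|lra].
    replace (- (A + B + C) / (2 * L) * L) with (- (A + B + C) / 2) in Hdr by (field; lra).
    exact Hdr. }
  specialize (H (1 - d) ltac:(lra)).
  replace (A + (1 - d) * B + (1 - d) * (1 - d) * C) with (A + B + C + d * - (B + C * (2 - d)))
    in H by ring.
  assert (- (B + C * (2 - d)) <= L).
  { unfold L. pose proof (Rle_abs (- B)). pose proof (Rle_abs (- C)). rewrite Rabs_Ropp in *.
    assert (- C * (2 - d) <= Rabs C * (2 - d)) by (apply Rmult_le_compat_r; lra).
    pose proof (Rabs_pos C). nra. }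
  assert (d * - (B + C * (2 - d)) <= d * L) by (apply Rmult_le_compat_l; lra).
  lra.
Qed.

Lemma toeplitz_form_nonneg c1 c2 h x0 x1 x2 : holomorphic_on_D h ->
  (forall z, Cabs z < 1 -> 0 < Re (caratheodory c1 c2 z (h z))) ->
  0 <= toeplitz_form 1 c1 c2 x0 x1 x2.
Proof.
  intros Hh Hpos. rewrite toeplitz_form_1. apply quadratic_nonneg_at_1. intros rho Hr.
  rewrite <- toeplitz_form_scale by lra. apply (toeplitz_form_circle_nonneg c1 c2 h); assumption.
Qed.

Definition deriv1_coef (a : nat -> Cx) (n : nat) : Cx := Cscal (INR (n + 1)) (a (n + 1)%nat).
Definition deriv2_coef (a : nat -> Cx) (n : nat) : Cx :=
  Cscal (INR ((n + 2) * (n + 1))) (a (n + 2)%nat).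

Lemma radius_ge1_deriv1 a : radius_ge1 a -> radius_ge1 (deriv1_coef a).
Proof.
  intro Ha. apply (radius_ge1_ext (pderiv a)); [|apply radius_ge1_pderiv, Ha].
  intro n. unfold pderiv, deriv1_coef. rewrite Nat.add_1_r. reflexivity.
Qed.

Lemma radius_ge1_deriv2 a : radius_ge1 a -> radius_ge1 (deriv2_coef a).
Proof.
  intro Ha. apply (radius_ge1_ext (pderiv (pderiv a)));
    [|apply radius_ge1_pderiv, radius_ge1_pderiv, Ha].
  intro n. unfold pderiv, deriv2_coef. replace (n + 2)%nat with (S (S n)) by lia.
  replace (S (S n) * (n + 1))%nat with (S n * S (S n))%nat by lia. rewrite mult_INR. ceq.
Qed.

Lemma Cdiv_Cinv x g : Cdiv x g = Cmul x (Cinv g).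
Proof. cdestr. cunfold. f_equal; unfold Rdiv; ring. Qed.

Definition classG_c1 (a2 : Cx) : Cx := Cscal (-4) a2.
Definition classG_c2 (a2 a3 : Cx) : Cx := Csub (Cscal 8 (Cmul a2 a2)) (Cscal 12 a3).

(* With [f' = 1 + z (2 a2 + z (3 a3 + z t1))] and [f'' = 2 a2 + z (6 a3 + z t2)],
   [f' - 2 z f'' = f' (1 + c1 z + c2 z^2) + z^3 classG_rem]. *)
Definition classG_rem (a2 a3 t1 t2 z : Cx) : Cx :=
  let c1 := classG_c1 a2 in let c2 := classG_c2 a2 a3 in
  Cadd (Cmul (RtoC (-2)) t2)
    (Cmul (RtoC (-1))
      (Cadd (Cadd (Cmul (Cscal 2 a2) c2) (Cmul (Cscal 3 a3) c1))
            (Cadd (Cmul (Cmul (Cscal 3 a3) c2) z) (Cmul t1 (Cadd (Cmul c1 z) (Cmul c2 (Cmul z z))))))).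

Lemma classG_identity a2 a3 t1 t2 z g s gi : Cmul g gi = C1 ->
  g = Cadd C1 (Cmul z (Cadd (Cscal 2 a2) (Cmul z (Cadd (Cscal 3 a3) (Cmul z t1))))) ->
  s = Cadd (Cscal 2 a2) (Cmul z (Cadd (Cscal 6 a3) (Cmul z t2))) ->
  caratheodory (classG_c1 a2) (classG_c2 a2 a3) z (Cmul (classG_rem a2 a3 t1 t2 z) gi)
  = Cmul (Csub g (Cscal 2 (Cmul z s))) gi.
Proof.
  intros Hggi Hg Hs.
  set (P2 := Cadd C1 (Cadd (Cmul (classG_c1 a2) z) (Cmul (classG_c2 a2 a3) (Cmul z z)))).
  set (E := classG_rem a2 a3 t1 t2 z).
  transitivity (Cadd (Cmul P2 (Cmul g gi)) (Cmul (Cmul z (Cmul z z)) (Cmul E gi)));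
    [rewrite Hggi; unfold caratheodory, P2; ceq|].
  transitivity (Cmul (Cadd (Cmul g P2) (Cmul (Cmul z (Cmul z z)) E)) gi); [ceq|].
  f_equal. subst g s. unfold P2, E, classG_rem, classG_c1, classG_c2. cbv zeta. ceq.
Qed.

Lemma psum_deriv1_split a z : radius_ge1 a -> a 1%nat = C1 -> Cabs z < 1 ->
  psum (deriv1_coef a) z
  = Cadd C1 (Cmul z (Cadd (Cscal 2 (a 2%nat)) (Cmul z (Cadd (Cscal 3 (a 3%nat))
      (Cmul z (psum (fun n => deriv1_coef a (S (S (S n)))) z)))))).
Proof.
  intros Ha Ha1 Hz. pose proof (radius_ge1_deriv1 a Ha) as R.
  pose proof (radius_ge1_tail _ R) as R'. pose proof (radius_ge1_tail _ R') as R''.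
  rewrite psum_tail, (psum_tail (fun n => _ (S n))), (psum_tail (fun n => _ (S (S n)))) by auto.
  unfold deriv1_coef. simpl. rewrite Ha1. ceq.
Qed.

Lemma psum_deriv2_split a z : radius_ge1 a -> Cabs z < 1 ->
  psum (deriv2_coef a) z
  = Cadd (Cscal 2 (a 2%nat)) (Cmul z (Cadd (Cscal 6 (a 3%nat))
      (Cmul z (psum (fun n => deriv2_coef a (S (S n))) z)))).
Proof.
  intros Ha Hz. pose proof (radius_ge1_deriv2 a Ha) as R. pose proof (radius_ge1_tail _ R) as R'.
  rewrite psum_tail, (psum_tail (fun n => _ (S n))) by auto.
  unfold deriv2_coef. simpl. ceq.
Qed.

Lemma classG_caratheodory a : class_G 1 a ->
  exists h, holomorphic_on_D h /\ forall z, Cabs z < 1 ->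
    0 < Re (caratheodory (classG_c1 (a 2%nat)) (classG_c2 (a 2%nat) (a 3%nat)) z (h z)).
Proof.
  intros [[Ha [_ Ha1]] Hcond]. apply radius_ge1_of_analytic in Ha.
  pose proof (radius_ge1_deriv1 a Ha) as R1. pose proof (radius_ge1_deriv2 a Ha) as R2.
  set (T1 := psum (fun n => deriv1_coef a (S (S (S n))))).
  set (T2 := psum (fun n => deriv2_coef a (S (S n)))).
  assert (HT : holomorphic_on_D T1 /\ holomorphic_on_D T2).
  { split; apply holomorphic_psum.
    - apply (radius_ge1_tail (fun n => deriv1_coef a (S (S n)))),
        (radius_ge1_tail (fun n => deriv1_coef a (S n))), radius_ge1_tail, R1.
    - apply (radius_ge1_tail (fun n => deriv2_coef a (S n))), radius_ge1_tail, R2. }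
  assert (Hnz : forall z, Cabs z < 1 -> psum (deriv1_coef a) z <> C0).
  { intros z Hz. apply in_D_Cabs in Hz.
    exact (proj1 (Hcond z _ _ Hz (psum_Csum _ z R1 Hz) (psum_Csum _ z R2 Hz))). }
  exists (fun z => Cmul (classG_rem (a 2%nat) (a 3%nat) (T1 z) (T2 z) z)
                   (Cinv (psum (deriv1_coef a) z))).
  split.
  - apply holomorphic_mul; [|apply holomorphic_inv; auto using holomorphic_psum].
    destruct HT. unfold classG_rem. cbv zeta. holomorphic.
  - intros z Hz. set (g := psum (deriv1_coef a) z). set (s := psum (deriv2_coef a) z).
    assert (Hg0 : g <> C0) by (apply Hnz, Hz).
    unfold T1, T2.
    rewrite (classG_identity _ _ _ _ z g s _ (Cmul_Cinv g Hg0) (psum_deriv1_split a z Ha Ha1 Hz)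
               (psum_deriv2_split a z Ha Hz)).
    apply in_D_Cabs in Hz.
    destruct (Hcond z g s Hz (psum_Csum _ z R1 Hz) (psum_Csum _ z R2 Hz)) as [_ Hre].
    rewrite Cdiv_Cinv in Hre.
    replace (Cmul (Csub g (Cscal 2 (Cmul z s))) (Cinv g))
      with (Csub (Cmul g (Cinv g)) (Cscal 2 (Cmul (Cmul z s) (Cinv g)))) by ceq.
    rewrite Cmul_Cinv by exact Hg0. revert Hre. cunfold. lra.
Qed.

Lemma classG_coefficient_family a : class_G 1 a -> forall s,
  0 <= (1 - 4 * Cnorm2 (a 2%nat)) * (36 * s * s * Cnorm2 (a 3%nat) + 1)
       - 72 * s * Cnorm2 (a 3%nat).
Proof.
  intros HG s. destruct (classG_caratheodory a HG) as [h [Hh Hpos]].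
  set (u := a 2%nat) in *. set (v := a 3%nat) in *.
  set (x0 := Cscal s (Cconj (Cscal 6 v))).
  pose proof (toeplitz_form_nonneg _ _ h x0 (Cadd (Cmul (Cscal 2 u) x0) (Cconj (Cscal 2 u))) C1
                                   Hh Hpos) as H.
  rewrite toeplitz_form_1 in H. unfold x0, classG_c1, classG_c2 in H. clearbody u v.
  revert H. cdestr. cunfold. intro H. nra.
Qed.

Lemma quadratic_family_bound w V : 0 <= V ->
  (forall s, 0 <= w * (36 * s * s * V + 1) - 72 * s * V) -> 0 <= w /\ 36 * V <= w * w.
Proof.
  intros HV H. pose proof (H 0) as H0. split; [lra|].
  destruct (Req_dec w 0) as [->|Hw].
  - specialize (H 1). lra.
  - specialize (H (/ w)).
    replace (w * (36 * / w * / w * V + 1) - 72 * / w * V) with ((w * w - 36 * V) / w) in H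
      by (field; exact Hw).
    assert (0 < w) by lra.
    apply (Rmult_le_compat_r w) in H; [|lra].
    replace ((w * w - 36 * V) / w * w) with (w * w - 36 * V) in H by (field; lra). lra.
Qed.

Lemma classG_a3_bound a : class_G 1 a -> 6 * Cabs (a 3%nat) <= 1 - 4 * Cnorm2 (a 2%nat).
Proof.
  intro HG.
  destruct (quadratic_family_bound _ _ (Cnorm2_ge0 (a 3%nat)) (classG_coefficient_family a HG))
    as [Hw HV].
  rewrite <- Cabs_sqr in HV. pose proof (Cabs_ge0 (a 3%nat)). nra.
Qed.

Lemma det_bounds U y X : 0 <= U -> 0 <= y -> 6 * y <= 1 - 4 * U -> Rabs X <= U * y ->
  1 / 2 <= 2 * X - 2 * U - y * y + 1 <= 1.
Proof.
  intros HU Hy H6 HX. pose proof (Rle_abs X). pose proof (Rle_abs (- X)). rewrite Rabs_Ropp in *.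
  split; [|nra].
  assert (U * y <= U * ((1 - 4 * U) / 6)) by (apply Rmult_le_compat_l; lra).
  assert (y * y <= (1 - 4 * U) / 6 * ((1 - 4 * U) / 6)) by nra.
  nra.
Qed.

Lemma classG_det_bounds a : class_G 1 a -> 1 / 2 <= detT31 a <= 1.
Proof.
  intro HG. unfold detT31. rewrite <- (Cabs_sqr (a 3%nat)).
  apply det_bounds; auto using Cnorm2_ge0, Cabs_ge0, classG_a3_bound.
  eapply Rle_trans; [apply Re_le_Cabs|].
  rewrite !Cabs_mul, Cabs_sqr. right. f_equal. unfold Cabs. f_equal. cdestr. cunfold. ring.
Qed.

Lemma Re_Cdiv_one_add w : Cnorm2 w < 1 -> Cadd C1 w <> C0 /\ Re (Cdiv w (Cadd C1 w)) < 1 / 2.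
Proof.
  intro Hw.
  assert (HD : Cnorm2 (Cadd C1 w) = 1 + 2 * Re w + Cnorm2 w) by (cdestr; cunfold; ring).
  assert (HN : Re (Cmul w (Cconj (Cadd C1 w))) = Re w + Cnorm2 w) by (cdestr; cunfold; ring).
  assert (Hpos : 0 < Cnorm2 (Cadd C1 w)).
  { rewrite HD. destruct w as [x y]. unfold Cnorm2, Re, Im in *; simpl in *.
    assert (-1 < x) by nra. nra. }
  split.
  - intro E. rewrite E in Hpos. cunfold. lra.
  - replace (Re (Cdiv w (Cadd C1 w))) with (Re (Cmul w (Cconj (Cadd C1 w))) / Cnorm2 (Cadd C1 w))
      by (cdestr; cunfold; unfold Rdiv; ring).
    rewrite HN. apply (Rmult_lt_reg_r (Cnorm2 (Cadd C1 w))); [exact Hpos|].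
    unfold Rdiv. rewrite Rmult_assoc, Rinv_l by lra. rewrite HD. lra.
Qed.

Definition quadratic_map (t : Cx) (n : nat) : Cx :=
  match n with 1%nat => C1 | 2%nat => t | _ => C0 end.

Lemma quadratic_map_high t n : (3 <= n)%nat -> quadratic_map t n = C0.
Proof. intro H. destruct n as [|[|[|n]]]; [lia..|reflexivity]. Qed.

Lemma class_G_quadratic_map t : Cabs t <= 1 / 2 -> class_G 1 (quadratic_map t).
Proof.
  intro Ht.
  assert (R0 : radius_ge1 (quadratic_map t))
    by (apply (radius_ge1_finite _ 2); intros; apply quadratic_map_high; lia).
  assert (R1 := radius_ge1_deriv1 _ R0). assert (R2 := radius_ge1_deriv2 _ R0).
  split; [split; [|split; reflexivity]|].
  { intros z Hz. exists (psum (quadratic_map t) z). apply psum_Csum; auto. }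
  intros z d1 d2 Hz H1 H2. pose proof Hz as Hz'. apply in_D_Cabs in Hz'.
  apply (Csum_unique _ _ _ (psum_Csum _ z R1 Hz)) in H1.
  apply (Csum_unique _ _ _ (psum_Csum _ z R2 Hz)) in H2.
  rewrite psum_tail, (psum_tail (fun n => _ (S n))), psum_zero in H1 by
    (auto using radius_ge1_tail
     || (intro n; unfold deriv1_coef; rewrite quadratic_map_high by lia; ceq)).
  rewrite psum_tail, psum_zero in H2 by
    (auto || (intro n; unfold deriv2_coef; rewrite quadratic_map_high by lia; ceq)).
  subst d1 d2. set (w := Cmul z (Cscal 2 t)).
  assert (Hw : Cnorm2 w < 1).
  { unfold w. rewrite Cnorm2_mul, <- !Cabs_sqr, Cabs_scal, Rabs_right by lra.
    pose proof (Cabs_ge0 t). pose proof (Cabs_ge0 z).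
    assert (2 * Cabs t * (2 * Cabs t) <= 1) by nra. assert (Cabs z * Cabs z < 1) by nra. nra. }
  destruct (Re_Cdiv_one_add w Hw) as [Hnz Hre].
  replace (Cadd (deriv1_coef (quadratic_map t) 0)
                (Cmul z (Cadd (deriv1_coef (quadratic_map t) 1) (Cmul z C0))))
    with (Cadd C1 w) by (unfold w, deriv1_coef; simpl; ceq).
  replace (Cadd (deriv2_coef (quadratic_map t) 0) (Cmul z C0)) with (Cscal 2 t)
    by (unfold deriv2_coef; simpl; ceq).
  split; [exact Hnz|]. fold w.
  change (1 + Re (Cdiv w (Cadd C1 w)) < 1 + 1 / 2). lra.
Qed.

Lemma detT31_quadratic_map t : detT31 (quadratic_map t) = 1 - 2 * Cnorm2 t.
Proof. unfold detT31. simpl. cdestr. cunfold. ring. Qed.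

Theorem theorem4 :
  (forall a : nat -> Cx, class_G 1 a -> 1 / 2 <= detT31 a <= 1) /\
  (exists a : nat -> Cx, class_G 1 a /\ detT31 a = 1 / 2) /\
  (exists a : nat -> Cx, class_G 1 a /\ detT31 a = 1).
Proof.
  split; [exact classG_det_bounds|split].
  - exists (quadratic_map (1 / 2, 0)). split.
    + apply class_G_quadratic_map. rewrite Cabs_real; lra.
    + rewrite detT31_quadratic_map. cunfold. field.
  - exists (quadratic_map C0). split.
    + apply class_G_quadratic_map. rewrite Cabs0. lra.
    + rewrite detT31_quadratic_map. cunfold. ring.
Qed.
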